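(* Let $G=(V,E)$ be a symmetric caterpillar with $n\ge 1$ spine vertices $s_1,\dots,s_n$, where $L_i$ denotes the number of leaves attached to $s_i$, and let $L=\max_{1\le i\le n}L_i$. Then $IDI(G)=L$ if $L\ge 2$, and $IDI(G)=2$ if $L=1$.
   Context: A caterpillar is a tree consisting of a path (the spine) $s_1,s_2,\dots,s_n$ together with leaves each attached to a spine vertex; $L_i\ge 0$ is the number of leaves attached to $s_i$, and $L_1,L_n\ge 1$ (a spine vertex is exactly a vertex of degree at least two, except that when $n=1$ the caterpillar is the star $K_{1,L_1}$). The caterpillar is symmetric if $L_j=L_{n+1-j}$ for all $1\le j\le\lfloor n/2\rfloor$. For a finite simple connected graph $G=(V,E)$ with diameter $d$, a rank assignment is a function $f:V\to\mathbb{R}$; under $f$, the string of a vertex $v$ is the $d$-vector whose $i$-th coordinate is the sum of $f(w)$ over all vertices $w$ with $d(v,w)=i$. The ID-index $IDI(G)$ is the minimum $k$ such that there exists $f:V\to\mathbb{R}$ with $|f(V)|=k$ under which all vertices have distinct strings. *)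

From HB Require Import structures.
From mathcomp Require Import all_boot all_order all_algebra.
From mathcomp Require Import Rstruct.
From Stdlib Require Rdefinitions.
Set Implicit Arguments. Unset Strict Implicit. Unset Printing Implicit Defensive.
Import Order.TTheory GRing.Theory Num.Theory.
Local Open Scope ring_scope.

Fixpoint walkN (T : finType) (e : rel T) (k : nat) (u v : T) : bool :=
  match k with
  | 0 => u == v
  | k'.+1 => [exists w, e u w && walkN e k' w v]
  end.

(* Graph distance: the least k with a walk of length k from u to v
   (the search over 0 .. #|T|-1 is exhaustive in a connected graph;
   unreachable pairs would get #|T|, which never happens for connected G). *)
Definition gdist (T : finType) (e : rel T) (u v : T) : nat :=
  find (fun k => walkN e k u v) (iota 0 #|T|).

Definition gdiam (T : finType) (e : rel T) : nat :=
  (\max_(u : T) \max_(v : T) gdist e u v)%N.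

Definition vstring (T : finType) (e : rel T) (f : T -> Rdefinitions.R) (v : T) : seq Rdefinitions.R :=
  [seq \sum_(w : T | gdist e v w == i.+1) f w | i <- iota 0 (gdiam e)].

Definition nvalues (T : finType) (f : T -> Rdefinitions.R) : nat :=
  size (undup [seq f v | v <- enum T]).

Definition distinguishing (T : finType) (e : rel T) (f : T -> Rdefinitions.R) : Prop :=
  injective (vstring e f).

Definition is_IDI (T : finType) (e : rel T) (k : nat) : Prop :=
  (exists f : T -> Rdefinitions.R, distinguishing e f /\ nvalues f = k) /\
  (forall f : T -> Rdefinitions.R, distinguishing e f -> (k <= nvalues f)%N).

(* The caterpillar with spine s_0,...,s_{n-1} (0-indexed) and Ls i leaves
   attached to s_i.  Vertices: inl i = spine vertex s_i, inr (Tagged i j) =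
   the j-th leaf attached to s_i. *)
Definition cat_vertex (n : nat) (Ls : nat -> nat) : finType :=
  ('I_n + {i : 'I_n & 'I_(Ls i)})%type.

Definition cat_adj (n : nat) (Ls : nat -> nat) : rel (cat_vertex n Ls) :=
  fun x y =>
    match x, y with
    | inl i, inl j => (i.+1 == j :> nat) || (j.+1 == i :> nat)
    | inl i, inr l => tag l == i
    | inr l, inl i => tag l == i
    | inr _, inr _ => false
    end.

(* Leaves hanging from a common spine vertex are twins: exchanging two of them
   is an automorphism, so a distinguishing assignment must give them distinct
   values, and the spine vertex with L leaves forces L values.  If L = 1, a
   constant assignment fails too, because the reflection of the spine (or, for
   K_2, the exchange of its two vertices) is a nontrivial automorphism.

   Conversely, let K = max(L, 2).  Give the j-th leaf of every spine vertex the
   rank K + j, the first spine vertex K + 1 and the other spine vertices K.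
   Equal strings at u and v force equal moments sum_w g(d(u,w)) f(w) for every
   g : nat -> R, and these moments do the rest.  They recover f(u).  They tell
   a spine vertex (whose neighbours weigh at least 2K) from a leaf (whose only
   neighbour weighs at most K + 1).  They pass from two leaves to their spine
   vertices.  They separate spine vertices by eccentricity and, for mirror
   images, by the extra weight of the first spine vertex. *)

From mathcomp Require Import all_boot all_order all_algebra perm.
From mathcomp Require Import Rstruct zify lra.
From Stdlib Require Rdefinitions.
Set Implicit Arguments. Unset Strict Implicit. Unset Printing Implicit Defensive.
Import Order.TTheory GRing.Theory Num.Theory.

Local Notation R := Rdefinitions.R.

Lemma find_iota0_least (P : pred nat) m k :
  k < m -> P k -> (forall j, j < k -> ~~ P j) -> find P (iota 0 m) = k.
Proof.
move=> km Pk Pmin.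
have hasP : has P (iota 0 m) by apply/hasP; exists k; rewrite ?mem_iota.
have Pfind : P (find P (iota 0 m)).
  have := nth_find 0 hasP; rewrite nth_iota //.
  by rewrite -[m in _ < m](size_iota 0 m) -has_find.
apply/eqP; rewrite eqn_leq; apply/andP; split; rewrite leqNgt; apply/negP.
- by move/(before_find 0); rewrite nth_iota // add0n Pk.
- by move/Pmin; rewrite Pfind.
Qed.

Lemma gdist_eq0 (T : finType) (e : rel T) (x y : T) :
  (gdist e x y == 0) = (x == y).
Proof.
rewrite /gdist; have : 0 < #|T| by apply/card_gt0P; exists x.
by case: #|T| => // m _ /=; case: (x == y).
Qed.

Lemma gdist_xx (T : finType) (e : rel T) (x : T) : gdist e x x = 0.
Proof. by apply/eqP; rewrite gdist_eq0. Qed.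

Section PathMetric.
Variables (T : finType) (e : rel T) (d : T -> T -> nat).
Hypothesis d_refl : forall x, d x x = 0.
Hypothesis d_edge : forall x w z, e x w -> d x z <= (d w z).+1.
Hypothesis d_descent : forall x y, x != y -> exists2 w, e x w & d x y = (d w y).+1.

Lemma dist_le_walkN k x y : walkN e k x y -> d x y <= k.
Proof.
elim: k x => [|k IHk] x /=; first by move/eqP->; rewrite d_refl.
by case/existsP=> w /andP[xw /IHk]; have := @d_edge x w y xw; lia.
Qed.

Lemma neq_of_dist_succ x y k : d x y = k.+1 -> x != y.
Proof. by apply: contra_eqN => /eqP->; rewrite d_refl. Qed.

Lemma walkN_dist x y : walkN e (d x y) x y.
Proof.
move Dk: (d x y) => k; elim: k x Dk => [|k IHk] x /= Dk.
  by case: (eqVneq x y) => // /d_descent[w _]; rewrite Dk.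
have [w xw] := d_descent (neq_of_dist_succ Dk); rewrite Dk => -[Dw].
by apply/existsP; exists w; rewrite xw IHk.
Qed.

Lemma dist_attained x y j : j <= d x y -> exists z, d z y = j.
Proof.
move Dk: (d x y) => k; elim: k x Dk => [|k IHk] x Dk jk.
  by exists y; rewrite d_refl; lia.
case: (eqVneq j k.+1) => [->|jk1]; first by exists x.
have [w _] := d_descent (neq_of_dist_succ Dk); rewrite Dk => -[Dw].
by apply: (IHk w); [rewrite Dw | lia].
Qed.

Lemma dist_lt_card x y : d x y < #|T|.
Proof.
have sub : {subset iota 0 (d x y).+1 <= [seq d z y | z <- enum T]}.
  move=> j; rewrite mem_iota add0n ltnS => /dist_attained[z <-].
  by rewrite map_f ?mem_enum.
by have := uniq_leq_size (iota_uniq 0 _) sub; rewrite size_iota size_map -cardE.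
Qed.

Lemma gdist_eq x y : gdist e x y = d x y.
Proof.
apply: find_iota0_least; [exact: dist_lt_card | exact: walkN_dist |].
by move=> j jd; apply/negP => /dist_le_walkN; lia.
Qed.
End PathMetric.

Lemma tperm_dist (T : finType) (d : T -> T -> nat) (x y : T) :
  (forall a, d a a = 0) -> (forall a b, d a b = d b a) ->
  (forall w, w != x -> w != y -> d x w = d y w) ->
  forall a b, d (tperm x y a) (tperm x y b) = d a b.
Proof.
move=> d0 dC twin a b.
case: tpermP => [->|->|/eqP ax /eqP ay]; case: tpermP => [->|->|/eqP bx /eqP by_];
  rewrite ?d0 //; first [ exact: dC | by rewrite twin | by rewrite -twin
                        | by rewrite dC twin // dC | by rewrite dC -twin // dC ].
Qed.

Section Strings.
Local Open Scope ring_scope.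
Variables (T : finType) (e : rel T) (f : T -> R).

Definition moment (g : nat -> R) (x : T) : R := \sum_w g (gdist e x w) * f w.

Lemma gdist_le_gdiam x w : (gdist e x w <= gdiam e)%N.
Proof.
apply: leq_trans (@leq_bigmax _ (fun v => gdist e x v) w) _.
exact: (@leq_bigmax _ (fun u => \max_v gdist e u v)%N x).
Qed.

Lemma momentE_vstring g x : g 0%N = 0 ->
  moment g x = \sum_(i < gdiam e) g i.+1 * (vstring e f x)`_i.
Proof.
move=> g0; rewrite /moment.
have -> : \sum_w g (gdist e x w) * f w =
    \sum_w \sum_(k < (gdiam e).+1) (if gdist e x w == k then g k * f w else 0).
  apply: eq_bigr => w _; rewrite -big_mkcond /=.
  have xw : (gdist e x w < (gdiam e).+1)%N by rewrite ltnS gdist_le_gdiam.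
  by rewrite (big_pred1 (Ordinal xw)).
rewrite exchange_big big_ord_recl /= big1 ?add0r => [|w _]; last first.
  by case: ifP; rewrite ?g0 ?mul0r.
apply: eq_bigr => i _.
by rewrite (nth_map 0%N) ?size_iota // nth_iota // -big_mkcond mulr_sumr.
Qed.

Lemma moment_split g x :
  moment g x = g 0%N * f x + moment (fun k => if k is 0 then 0 else g k) x.
Proof.
rewrite /moment (bigD1 x) //= [in RHS](bigD1 x) //= gdist_xx mul0r add0r.
congr (_ + _); apply: eq_bigr => w wx.
by have := gdist_eq0 e x w; rewrite [x == w]eq_sym (negbTE wx); case: (gdist e x w).
Qed.

Lemma vstring_rank u v : vstring e f u = vstring e f v -> f u = f v.
Proof.
move=> uv; pose g k : R := (k != 0%N)%:R.
have total x : moment g x = \sum_w f w - f x.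
  rewrite [in RHS](bigD1 x) //= addrAC subrr add0r /moment (bigD1 x) //= gdist_xx mul0r add0r.
  by apply: eq_bigr => w wx; rewrite /g gdist_eq0 eq_sym wx mul1r.
have : moment g u = moment g v by rewrite !momentE_vstring // uv.
by rewrite !total; lra.
Qed.

Lemma moment_vstring g u v : vstring e f u = vstring e f v -> moment g u = moment g v.
Proof.
by move=> uv; rewrite moment_split [RHS]moment_split (vstring_rank uv) !momentE_vstring ?uv.
Qed.

Lemma vstring_aut (s : T -> T) x : injective s ->
  (forall a b, gdist e (s a) (s b) = gdist e a b) -> (forall a, f (s a) = f a) ->
  vstring e f (s x) = vstring e f x.
Proof.
move=> s_inj sd sf; apply: eq_map => i; rewrite (reindex_inj s_inj).
by apply: eq_big => w; rewrite ?sd ?sf.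
Qed.

Lemma nvalues_ge_inj (I : finType) (g : I -> T) : injective (f \o g) -> (#|I| <= nvalues f)%N.
Proof.
move=> fg_inj; rewrite /nvalues cardE -(size_map (f \o g)).
apply: uniq_leq_size; first by rewrite map_inj_uniq ?enum_uniq.
by move=> r /mapP[i _ ->]; rewrite mem_undup; apply: map_f; rewrite mem_enum.
Qed.

Lemma nvalues_le1_const x y : (nvalues f <= 1)%N -> f x = f y.
Proof.
move=> le1; case: (eqVneq (f x) (f y)) => // /eqP fxy.
have : (#|{: bool}| <= nvalues f)%N.
  apply: (@nvalues_ge_inj _ (fun b => if b then x else y)).
  by move=> [] [] //= fe; case: fxy; rewrite fe.
by rewrite card_bool; lia.
Qed.

Lemma nvalues_eq_size (s : seq R) : uniq s ->
  [seq f v | v <- enum T] =i s -> nvalues f = size s.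
Proof.
move=> s_uniq fs; apply/perm_size/uniq_perm; rewrite ?undup_uniq //.
by move=> r; rewrite mem_undup fs.
Qed.
End Strings.

Section Caterpillar.
Variables (n : nat) (Ls : nat -> nat).
Local Notation V := (cat_vertex n Ls).
Local Notation adj := (@cat_adj n Ls).

Definition leaf (i : 'I_n) (j : 'I_(Ls i)) : V :=
  inr (Tagged (fun k : 'I_n => 'I_(Ls k)) j).

Definition spine_pos (x : V) : nat := match x with inl i => i | inr l => tag l end.
Definition depth (x : V) : nat := match x with inl _ => 0 | inr _ => 1 end.
Definition leaf_index (x : V) : nat := match x with inl _ => 0 | inr l => tagged l end.

Definition cat_dist (x y : V) : nat :=
  if x == y then 0
  else (spine_pos x - spine_pos y) + (spine_pos y - spine_pos x) + depth x + depth y.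

Lemma spine_pos_lt x : spine_pos x < n.
Proof. by case: x => [i|[i j]] /=. Qed.

Lemma depth_le1 x : depth x <= 1.
Proof. by case: x. Qed.

Lemma cat_vertex_eq x y : spine_pos x = spine_pos y -> depth x = depth y ->
  leaf_index x = leaf_index y -> x = y.
Proof.
case: x => [i|[i j]]; case: y => [k|[k l]] //= /ord_inj ik _; first by rewrite ik.
by subst k => /ord_inj ->.
Qed.

Lemma leaf_inj i : injective (@leaf i).
Proof. by move=> j j' /(congr1 leaf_index) /ord_inj. Qed.

Lemma cat_distE x y : x != y ->
  cat_dist x y = (spine_pos x - spine_pos y) + (spine_pos y - spine_pos x) + depth x + depth y.
Proof. by rewrite /cat_dist => /negbTE ->. Qed.

Lemma cat_dist_xx x : cat_dist x x = 0.
Proof. by rewrite /cat_dist eqxx. Qed.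

Lemma cat_distC x y : cat_dist x y = cat_dist y x.
Proof. by rewrite /cat_dist eq_sym; case: ifP => // _; lia. Qed.

Lemma cat_dist_triangle x y z : cat_dist x z <= cat_dist x y + cat_dist y z.
Proof.
case: (eqVneq x y) => [->|xy]; first by rewrite cat_dist_xx.
case: (eqVneq y z) => [->|yz]; first by rewrite cat_dist_xx addn0.
case: (eqVneq x z) => [->|xz]; first by rewrite cat_dist_xx.
by rewrite !cat_distE //; lia.
Qed.

Lemma cat_adjE x y : adj x y = (cat_dist x y == 1).
Proof.
case: (eqVneq x y) => [->|xy].
  by rewrite cat_dist_xx; case: y => [i|l] //=; lia.
rewrite cat_distE //; move: xy.
case: x => [i|[i j]]; case: y => [k|[k l]] //= xy.
- by apply/idP/idP; [lia | move=> ik; apply/orP; lia].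
- by rewrite -val_eqE /=; apply/idP/idP; lia.
- by rewrite -val_eqE /=; apply/idP/idP; lia.
- by rewrite addn1 addnS eqSS; apply/esym/negbTE; lia.
Qed.

Lemma spine_eqE (i k : 'I_n) : ((inl i : V) == inl k) = (i == k :> nat).
Proof. by []. Qed.

Lemma cat_dist_edge x w z : adj x w -> cat_dist x z <= (cat_dist w z).+1.
Proof. by rewrite cat_adjE => /eqP xw; have := cat_dist_triangle x w z; lia. Qed.

Lemma cat_dist_leaf l w : w != inr l -> cat_dist (inr l) w = (cat_dist (inl (tag l)) w).+1.
Proof.
move=> wl; case: (eqVneq w (inl (tag l))) => [->|wt].
  by rewrite cat_dist_xx cat_distE //= subnn.
by rewrite !cat_distE 1?eq_sym //=; lia.
Qed.

Lemma cat_dist_descent x y : x != y -> exists2 w, adj x w & cat_dist x y = (cat_dist w y).+1.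
Proof.
case: x => [i|[i j]] xy; last first.
  by exists (inl i); rewrite /= ?eqxx // cat_dist_leaf // eq_sym.
have toward (k : 'I_n) :
    ((k.+1 == i :> nat) && (spine_pos y < i)) || ((i.+1 == k :> nat) && (i < spine_pos y)) ->
    exists2 w, adj (inl i) w & cat_dist (inl i) y = (cat_dist w y).+1.
  move=> ik; exists (inl k); first by rewrite /=; lia.
  have neq_ik : (inl i : V) != inl k by rewrite spine_eqE; lia.
  by case: (eqVneq (inl k : V) y) => [<-|ky]; rewrite ?cat_dist_xx !cat_distE //=; lia.
have i_lt := ltn_ord i.
case: (ltngtP (spine_pos y) i) => yi.
- have i1 : i.-1 < n by lia.
  by apply: (toward (Ordinal i1)); rewrite /=; lia.
- have i1 : i.+1 < n by have := spine_pos_lt y; lia.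
  by apply: (toward (Ordinal i1)); rewrite /=; lia.
- clear toward; case: y xy yi => [k|[k l]] /= xy yi.
    by case/eqP: xy; congr inl; exact: ord_inj.
  exists (leaf l); first by apply/eqP/ord_inj.
  by rewrite /leaf cat_dist_xx cat_distE //=; lia.
Qed.

Lemma gdist_cat x y : gdist adj x y = cat_dist x y.
Proof. exact: gdist_eq cat_dist_xx cat_dist_edge cat_dist_descent x y. Qed.

Lemma cat_dist_eq0 x y : (cat_dist x y == 0) = (x == y).
Proof. by rewrite -gdist_cat gdist_eq0. Qed.

Lemma cat_dist_spine (a b : 'I_n) : cat_dist (inl a) (inl b) = (a - b) + (b - a).
Proof.
case: (eqVneq (inl a : V) (inl b)) => [[->]|ab]; first by rewrite cat_dist_xx subnn.
by rewrite cat_distE // !addn0.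
Qed.

Lemma cat_dist_spine_leaf a (l : {i : 'I_n & 'I_(Ls i)}) :
  cat_dist (inl a) (inr l) = ((a - tag l) + (tag l - a)).+1.
Proof. by rewrite cat_distE //= addn0 addn1. Qed.

Definition max_leaves : nat := \max_(i < n) Ls i.
Definition cat_idi : nat := if 2 <= max_leaves then max_leaves else 2.

Lemma leq_Ls_max (i : 'I_n) : Ls i <= max_leaves.
Proof. exact: (@leq_bigmax _ (fun i : 'I_n => Ls i) i). Qed.

Lemma max_leaves_le_idi : max_leaves <= cat_idi.
Proof. by rewrite /cat_idi; case: ifP => // /negbT; lia. Qed.

Lemma two_le_idi : 2 <= cat_idi.
Proof. by rewrite /cat_idi; case: ifP. Qed.

Lemma vstring_twins (f : V -> R) x y :
  (forall w, w != x -> w != y -> cat_dist x w = cat_dist y w) -> f x = f y ->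
  vstring adj f x = vstring adj f y.
Proof.
move=> twin fxy; rewrite -[y in RHS](tpermL x y) vstring_aut //.
- exact: perm_inj.
- by move=> a b; rewrite !gdist_cat tperm_dist //; [exact: cat_dist_xx | exact: cat_distC].
- by move=> a; case: tpermP => // ->.
Qed.

Section Symmetric.
Hypothesis hn : 1 <= n.
Hypothesis hL1 : 1 <= Ls 0.
Hypothesis hLn : 1 <= Ls n.-1.
Hypothesis hsym : forall j, j < n -> Ls j = Ls (n.-1 - j).

Definition i_first : 'I_n := Ordinal hn.
Definition i_last : 'I_n := Ordinal (etrans (ltn_predL n) hn).
Definition spine_first : V := inl i_first.
Definition spine_last : V := inl i_last.

Lemma Ls_rev (i : 'I_n) : Ls i = Ls (rev_ord i).
Proof. by rewrite hsym //=; congr Ls; have := ltn_ord i; lia. Qed.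

Definition mirror (x : V) : V :=
  match x with
  | inl i => inl (rev_ord i)
  | inr l => leaf (cast_ord (Ls_rev (tag l)) (tagged l))
  end.

Lemma spine_pos_mirror x : spine_pos (mirror x) = n.-1 - spine_pos x.
Proof. by case: x => [i|[i j]] /=; have := ltn_ord i; lia. Qed.

Lemma depth_mirror x : depth (mirror x) = depth x.
Proof. by case: x. Qed.

Lemma leaf_index_mirror x : leaf_index (mirror x) = leaf_index x.
Proof. by case: x. Qed.

Lemma mirror_inj : injective mirror.
Proof.
move=> x y xy; apply: cat_vertex_eq.
- have := congr1 spine_pos xy; rewrite !spine_pos_mirror.
  by have := spine_pos_lt x; have := spine_pos_lt y; lia.
- by have := congr1 depth xy; rewrite !depth_mirror.
- by have := congr1 leaf_index xy; rewrite !leaf_index_mirror.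
Qed.

Lemma cat_dist_mirror x y : cat_dist (mirror x) (mirror y) = cat_dist x y.
Proof.
case: (eqVneq x y) => [->|xy]; first by rewrite !cat_dist_xx.
have mxy : mirror x != mirror y by rewrite (inj_eq mirror_inj).
rewrite !cat_distE // !spine_pos_mirror !depth_mirror.
by have := spine_pos_lt x; have := spine_pos_lt y; lia.
Qed.

Lemma exists_max_leaves : exists i : 'I_n, Ls i = max_leaves.
Proof.
have n_pos : 0 < #|'I_n| by rewrite card_ord.
have [i iL] := @bigop.eq_bigmax _ (fun i : 'I_n => Ls i) n_pos.
by exists i; rewrite /max_leaves iL.
Qed.

Lemma leaves_le_nvalues f : distinguishing adj f -> max_leaves <= nvalues f.
Proof.
move=> f_dist; have [i <-] := exists_max_leaves.
rewrite -[Ls i]card_ord; apply: (nvalues_ge_inj (g := @leaf i)) => j j' /= fj.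
apply/leaf_inj/f_dist/vstring_twins => // w wj wj'.
by rewrite !cat_distE 1?eq_sym.
Qed.

Lemma two_le_nvalues f : distinguishing adj f -> max_leaves <= 1 -> 2 <= nvalues f.
Proof.
move=> f_dist L1; rewrite ltnNge; apply/negP => /nvalues_le1_const f_const.
case: (ltnP 1 n) => [n_gt1 | n_le1].
  have : mirror spine_first = spine_first.
    apply/f_dist/vstring_aut => //; first exact: mirror_inj.
    by move=> a b; rewrite !gdist_cat cat_dist_mirror.
  by move/(congr1 spine_pos) => /=; lia.
have : spine_first = @leaf i_first (Ordinal hL1).
  apply/f_dist/vstring_twins => // -[k|[k j]] wk wl; exfalso.
    by case/eqP: wk; congr inl; apply: ord_inj; have := ltn_ord k; rewrite /=; lia.
  have k0 : nat_of_ord k = 0 by have := ltn_ord k; lia.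
  case/eqP: wl; apply: cat_vertex_eq => //=;
  by have := leq_trans (ltn_ord j) (leq_Ls_max k); lia.
by [].
Qed.

Lemma idi_le_nvalues f : distinguishing adj f -> cat_idi <= nvalues f.
Proof.
move=> f_dist; rewrite /cat_idi; case: ifP => [_|/negbT].
  exact: leaves_le_nvalues.
by rewrite -ltnNge ltnS; exact: two_le_nvalues.
Qed.

(* Only the first spine vertex stands out; this is what tells a spine vertex
   from its mirror image. *)
Definition rank_index (x : V) : nat :=
  if x is inl i then nat_of_bool (i == 0 :> nat) else leaf_index x.

Lemma rank_index_lt x : rank_index x < cat_idi.
Proof.
case: x => [i|[i j]] /=; first by have := two_le_idi; case: (_ == _) => /=; lia.
by have := leq_trans (ltn_ord j) (leq_Ls_max i); have := max_leaves_le_idi; lia.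
Qed.

Local Open Scope ring_scope.

(* The shift by [cat_idi >= 2] makes any two ranks add up to more than the
   rank of a spine vertex. *)
Definition cat_rank (x : V) : R := (cat_idi + rank_index x)%:R.

Lemma cat_rank_inj x y : cat_rank x = cat_rank y -> rank_index x = rank_index y.
Proof. by move/eqP; rewrite eqr_nat eqn_add2l => /eqP. Qed.

Lemma cat_rank_ge x : cat_idi%:R <= cat_rank x.
Proof. by rewrite ler_nat leq_addr. Qed.

Lemma cat_rank_gt0 x : 0 < cat_rank x.
Proof. by rewrite ltr0n; have := two_le_idi; lia. Qed.

Lemma cat_rank_spine i : cat_rank (inl i) <= (cat_idi + 1)%:R.
Proof. by rewrite ler_nat leq_add2l /=; case: (_ == _). Qed.

Lemma nvalues_cat_rank : nvalues cat_rank = cat_idi.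
Proof.
have shift_inj : injective (fun j => (cat_idi + j)%:R : R).
  by move=> j j' /eqP; rewrite eqr_nat eqn_add2l => /eqP.
rewrite -[cat_idi in RHS](size_iota 0) -(size_map (fun j => (cat_idi + j)%:R : R)).
apply: nvalues_eq_size; first by rewrite map_inj_uniq ?iota_uniq.
move=> r; apply/mapP/mapP => [[x _ ->] | [j]].
  by exists (rank_index x); rewrite // mem_iota add0n rank_index_lt.
rewrite mem_iota add0n => /= jK ->.
have [i iL] := exists_max_leaves.
case: (ltnP j max_leaves) => [jL | Lj].
  have ji : (j < Ls i)%N by rewrite iL.
  by exists (leaf (Ordinal ji)); rewrite ?mem_enum.
exists spine_first; rewrite ?mem_enum // /cat_rank /=; congr (_ + _)%:R.
by move: jK Lj; rewrite /cat_idi; have := leq_Ls_max i_first; case: ifP => /=; lia.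
Qed.

Local Notation mom := (moment adj cat_rank).

Lemma momentE h x : mom h x = \sum_w h (cat_dist x w) * cat_rank w.
Proof. by apply: eq_bigr => w _; rewrite gdist_cat. Qed.

Lemma moment_ge_term h x w : (forall k, 0 <= h k) ->
  h (cat_dist x w) * cat_rank w <= mom h x.
Proof.
move=> h_ge0; rewrite momentE (bigD1 w) //= lerDl.
by apply: sumr_ge0 => v _; rewrite mulr_ge0 // ltW ?cat_rank_gt0.
Qed.

Lemma moment_ge_pair h x w1 w2 : (forall k, 0 <= h k) -> w1 != w2 ->
  h (cat_dist x w1) * cat_rank w1 + h (cat_dist x w2) * cat_rank w2 <= mom h x.
Proof.
move=> h_ge0 w12; rewrite momentE (bigD1 w1) //= (bigD1 w2) 1?eq_sym //= addrA lerDl.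
by apply: sumr_ge0 => v _; rewrite mulr_ge0 // ltW ?cat_rank_gt0.
Qed.

Lemma moment_leaf_parent l h : mom h (inl (tag l)) =
  mom (fun k => if k is k'.+1 then h k' else 0) (inr l) + h 1%N * cat_rank (inr l).
Proof.
rewrite !momentE (bigD1 (inr l)) //= [in RHS](bigD1 (inr l)) //= cat_dist_xx mul0r add0r.
rewrite cat_dist_spine_leaf subnn addrC; congr (_ + _).
by apply: eq_bigr => w wl; rewrite cat_dist_leaf.
Qed.

Lemma parent_moment_vstring l l' :
  vstring adj cat_rank (inr l) = vstring adj cat_rank (inr l') ->
  forall h, mom h (inl (tag l)) = mom h (inl (tag l')).
Proof.
by move=> ll' h; rewrite !moment_leaf_parent (moment_vstring _ ll') (vstring_rank ll').
Qed.

Lemma moment_leaf_nbrs l : mom (fun k => (k == 1)%:R) (inr l) = cat_rank (inl (tag l)).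
Proof.
rewrite momentE (bigD1 (inl (tag l))) //= cat_distC cat_dist_spine_leaf subnn mul1r.
rewrite big1 ?addr0 // => w wt.
case: (eqVneq w (inr l)) => [->|wl]; first by rewrite cat_dist_xx mul0r.
by rewrite cat_dist_leaf // eqSS cat_dist_eq0 eq_sym (negbTE wt) mul0r.
Qed.

Lemma spine_two_nbrs (i : 'I_n) : (1 < n)%N || (1 < Ls 0)%N ->
  exists w1 w2, [/\ w1 != w2, cat_dist (inl i) w1 = 1%N & cat_dist (inl i) w2 = 1%N].
Proof.
move=> big_enough; have i_lt := ltn_ord i.
have prev : (i.-1 < n)%N by lia.
case: (ltnP 0 i) => i_gt0; case: (ltnP i.+1 n) => i_last.
- exists (inl (Ordinal prev)), (inl (Ordinal i_last)).
  by rewrite spine_eqE !cat_dist_spine /=; split; lia.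
- have Li : (0 < Ls i)%N by have -> : nat_of_ord i = n.-1 by lia.
  exists (inl (Ordinal prev)), (leaf (Ordinal Li)).
  by rewrite cat_dist_spine cat_dist_spine_leaf /=; split; lia.
- have Li : (0 < Ls i)%N by have -> : nat_of_ord i = 0%N by lia.
  exists (inl (Ordinal i_last)), (leaf (Ordinal Li)).
  by rewrite cat_dist_spine cat_dist_spine_leaf /=; split; lia.
- have Li : (1 < Ls i)%N.
    have i0 : nat_of_ord i = 0%N by lia.
    by rewrite i0; move: big_enough => /orP[]; lia.
  exists (leaf (Ordinal (ltnW Li))), (leaf (Ordinal Li)).
  rewrite !cat_dist_spine_leaf subnn; split => //.
  by apply/eqP => /(congr1 leaf_index).
Qed.

Lemma spine_leaf_vstring i l :
  vstring adj cat_rank (inl i) <> vstring adj cat_rank (inr l).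
Proof.
move=> il; have K2 := two_le_idi.
case: (boolP ((1 < n)%N || (1 < Ls 0)%N)) => [big_enough | K_2].
  have [w1 [w2 [w12 d1 d2]]] := spine_two_nbrs i big_enough.
  have := @moment_ge_pair (fun k => (k == 1%N)%:R) (inl i) w1 w2 (fun k => ler0n _ _) w12.
  rewrite (moment_vstring _ il) moment_leaf_nbrs d1 d2 !mul1r.
  have := cat_rank_ge w1; have := cat_rank_ge w2; have := cat_rank_spine (tag l).
  have : (cat_idi + 1)%:R < cat_idi%:R + cat_idi%:R :> R by rewrite -natrD ltr_nat; lia.
  lra.
(* Otherwise the caterpillar is K_2, whose two ranks differ. *)
move: K_2; rewrite negb_or -!leqNgt => /andP[n_le1 L0_le1].
have i0 : nat_of_ord i = 0%N by have := ltn_ord i; lia.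
have t0 : nat_of_ord (tag l) = 0%N by have := ltn_ord (tag l); lia.
have Lt : Ls (tag l) = 1%N by rewrite t0; lia.
have j0 : nat_of_ord (tagged l) = 0%N by have := ltn_ord (tagged l); lia.
by have := cat_rank_inj (vstring_rank il); rewrite /= i0 j0.
Qed.

Definition spine_ecc (i : 'I_n) : nat := (maxn i (n.-1 - i)).+1.

Lemma cat_dist_le_ecc i w : (cat_dist (inl i) w <= spine_ecc i)%N.
Proof.
case: (eqVneq (inl i : V) w) => [<-|iw]; first by rewrite cat_dist_xx.
rewrite cat_distE //= /spine_ecc.
by have := spine_pos_lt w; have := depth_le1 w; have := ltn_ord i; lia.
Qed.

Lemma spine_ecc_attained i : exists w, cat_dist (inl i) w = spine_ecc i.
Proof.
have i_lt := ltn_ord i; rewrite /spine_ecc.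
case: (leqP i (n.-1 - i)) => far_end.
  by exists (@leaf i_last (Ordinal hLn)); rewrite cat_dist_spine_leaf /=; lia.
by exists (@leaf i_first (Ordinal hL1)); rewrite cat_dist_spine_leaf /=; lia.
Qed.

Lemma moment_dist_attained x y j : (forall h, mom h x = mom h y) ->
  (exists w, cat_dist x w = j) -> exists w, cat_dist y w = j.
Proof.
move=> xy [w xw]; pose h k : R := (k == j)%:R.
case: (pickP (fun v => cat_dist y v == j)) => [v /eqP yv | none]; first by exists v.
have : 0 < mom h x.
  apply: lt_le_trans (@moment_ge_term h x w (fun k => ler0n _ _)).
  by rewrite /h xw eqxx mul1r cat_rank_gt0.
rewrite xy momentE big1 ?ltxx // => v _.
by have := none v; rewrite /h /= => ->; rewrite mul0r.
Qed.

Lemma spine_ecc_moment i k : (forall h, mom h (inl i) = mom h (inl k)) ->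
  (spine_ecc i <= spine_ecc k)%N.
Proof.
move=> ik; have [w iw] := spine_ecc_attained i.
have [v <-] := moment_dist_attained ik (ex_intro _ w iw).
exact: cat_dist_le_ecc.
Qed.

Lemma rank_sub_mirror w :
  cat_rank w - cat_rank (mirror w) = (w == spine_first)%:R - (w == spine_last)%:R.
Proof.
case: w => [i|l]; last by rewrite /cat_rank /= !subrr.
rewrite /cat_rank /= !spine_eqE /= !natrD opprD addrACA subrr add0r.
have i_lt := ltn_ord i.
by have -> : (n - i.+1 == 0)%N = (i == n.-1 :> nat) by apply/idP/idP => /eqP ?; apply/eqP; lia.
Qed.

Lemma moment_sub_mirror h x :
  mom h x - mom h (mirror x) = h (cat_dist x spine_first) - h (cat_dist x spine_last).
Proof.
have pick a : \sum_w h (cat_dist x w) * (w == a)%:R = h (cat_dist x a).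
  by rewrite (bigD1 a) //= eqxx mulr1 big1 ?addr0 // => w /negbTE ->; rewrite mulr0.
have mom_mirror : mom h (mirror x) = \sum_w h (cat_dist x w) * cat_rank (mirror w).
  rewrite momentE (reindex_inj mirror_inj).
  by apply: eq_bigr => w _; rewrite cat_dist_mirror.
rewrite momentE mom_mirror -sumrB -(pick spine_first) -(pick spine_last) -sumrB.
by apply: eq_bigr => w _; rewrite -!mulrBr rank_sub_mirror.
Qed.

Lemma spine_moment_inj i k : (forall h, mom h (inl i) = mom h (inl k)) -> i = k.
Proof.
move=> ik; case: (eqVneq i k) => // neq_ik; exfalso.
have ecc_ik : spine_ecc i = spine_ecc k.
  by apply/eqP; rewrite eqn_leq !spine_ecc_moment // => h; rewrite ik.
have neq_val : i != k :> nat by [].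
have k_val : k = (n.-1 - i)%N :> nat.
  by move: ecc_ik; rewrite /spine_ecc; have := ltn_ord i; have := ltn_ord k; lia.
have k_mirror : inl k = mirror (inl i).
  by congr inl; apply: ord_inj; rewrite k_val /=; lia.
pose h (m : nat) : R := (m == i)%:R.
have := moment_sub_mirror h (inl i); rewrite -k_mirror ik subrr.
have -> : cat_dist (inl i) spine_first = i by rewrite cat_dist_spine /=; lia.
have -> : cat_dist (inl i) spine_last = k.
  by rewrite cat_dist_spine k_val /=; have := ltn_ord i; lia.
by rewrite /h eqxx eq_sym (negbTE neq_val) /= subr0 => /eqP; rewrite eq_sym oner_eq0.
Qed.

Lemma cat_rank_distinguishing : distinguishing adj cat_rank.
Proof.
move=> [i|l] [k|l'] uv.
- by rewrite (spine_moment_inj (fun h => moment_vstring h uv)).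
- by case: (spine_leaf_vstring uv).
- by case: (spine_leaf_vstring (esym uv)).
- have tag_ll' := spine_moment_inj (parent_moment_vstring uv).
  apply: cat_vertex_eq => //=; first by rewrite tag_ll'.
  exact: cat_rank_inj (vstring_rank uv).
Qed.

End Symmetric.
End Caterpillar.

Theorem mainTheorem15 (n : nat) (Ls : nat -> nat)
  (hn : (1 <= n)%N)
  (hL1 : (1 <= Ls 0)%N) (hLn : (1 <= Ls n.-1)%N)
  (hsym : forall j : nat, (j < n)%N -> Ls j = Ls (n.-1 - j)%N) :
  let L := (\max_(i < n) Ls i)%N in
  is_IDI (@cat_adj n Ls) (if (2 <= L)%N then L else 2%N).
Proof.
move=> L; have -> : (if (2 <= L)%N then L else 2%N) = cat_idi n Ls by [].
split.
- exists (@cat_rank n Ls); split; first exact: cat_rank_distinguishing hn hL1 hLn hsym.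
  exact: nvalues_cat_rank.
- exact: idi_le_nvalues.
Qed.
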